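(* Let $S$ be a shape graph, let $t\in\Gamma$, and let $T=\{t'\in\Gamma\mid t=t'\}$ be the set of types equivalent to $t$ w.r.t. $S$. Then for every shape graph $S'$ with $S'\equiv S$ and every context $(u,a)\in\Gamma\times\Sigma$: $$\sum_{s\in T}\mathsf{minarity}_S(u,a,s)=\sum_{s\in T}\mathsf{minarity}_{S'}(u,a,s).$$
   Context: Fix finite sets $\Sigma$ (edge labels) and $\Gamma$ (types). Graphs and shape graphs. A graph is $G=(N_G,E_G)$ with $E_G\subseteq N_G\times\Sigma\times N_G$. A shape graph is a function $\mathsf{arity}_S:\Gamma\times\Sigma\times\Gamma\to\{[0;0],[0;1],[1;1],[0;\infty],[1;\infty]\}$. $\mathsf{minarity}_S(u,a,s)$ denotes the lower bound of the interval $\mathsf{arity}_S(u,a,s)$. Satisfaction. A node $n$ satisfies type $t$ w.r.t. $S$ iff there is $\lambda$ from the outgoing edges of $n$ to $\Gamma$ such that (1) each edge's target satisfies $\lambda(e)$, and (2) for all $a\in\Sigma$ and $s\in\Gamma$, the number of outgoing $a$-edges $e$ with $\lambda(e)=s$ lies in $\mathsf{arity}_S(t,a,s)$. (This recursion is read as the largest such relation, as usual for shape expression schemas.) Typings and languages. $\mathit{typing}_G(n)$ is the set of types that $n$ satisfies. $L(S)$ is the set of finite graphs, equipped with their typing, in which every node has at least one type. $S\equiv S'$ iff $L(S)=L(S')$. Type equivalence. $t=t'$ w.r.t. $S$ means: for every $G\in L(S)$ and $n\in N_G$, $t\in\mathit{typing}_G(n)$ iff $t'\in\mathit{typing}_G(n)$.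 A context is a pair $(u,a)\in\Gamma\times\Sigma$. *)

From mathcomp Require Import all_boot.
Set Implicit Arguments. Unset Strict Implicit. Unset Printing Implicit Defensive.

(* The five admissible arity intervals [0;0],[0;1],[1;1],[0;oo],[1;oo]. *)
Inductive arity := A00 | A01 | A11 | A0inf | A1inf.

Definition in_arity (k : nat) (i : arity) : bool :=
  match i with
  | A00 => k == 0
  | A01 => k <= 1
  | A11 => k == 1
  | A0inf => true
  | A1inf => 0 < k
  end.

Definition min_of (i : arity) : nat :=
  match i with A11 | A1inf => 1 | _ => 0 end.

Definition shape_graph (Gamma Sigma : finType) := Gamma -> Sigma -> Gamma -> arity.

Definition minarity (Gamma Sigma : finType) (S : shape_graph Gamma Sigma)
  (u : Gamma) (a : Sigma) (s : Gamma) : nat := min_of (S u a s).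

Definition graph (N Sigma : finType) := {set (N * Sigma) * N}.

(* One unfolding of the satisfaction condition for node n and type t,
   relative to a candidate relation R (node satisfies type). lam assigns a
   type to each edge; only outgoing edges of n matter. *)
Definition locally_ok (Gamma Sigma N : finType) (S : shape_graph Gamma Sigma)
  (E : graph N Sigma) (R : N -> Gamma -> Prop) (n : N) (t : Gamma) : Prop :=
  exists lam : (N * Sigma) * N -> Gamma,
    (forall e, e \in E -> e.1.1 = n -> R e.2 (lam e)) /\
    (forall (a : Sigma) (s : Gamma),
        in_arity #|[set e in E | (e.1.1 == n) && (e.1.2 == a) && (lam e == s)]|
                 (S t a s)).

(* Satisfaction: the largest relation closed under locally_ok
   (greatest fixpoint, as a union of post-fixpoints). *)
Definition sat (Gamma Sigma N : finType) (S : shape_graph Gamma Sigma)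
  (E : graph N Sigma) (n : N) (t : Gamma) : Prop :=
  exists R : N -> Gamma -> Prop,
    (forall m t', R m t' -> locally_ok S E R m t') /\ R n t.

Definition in_lang (Gamma Sigma N : finType) (S : shape_graph Gamma Sigma)
  (E : graph N Sigma) : Prop :=
  forall n : N, exists t : Gamma, sat S E n t.

(* L(S) = L(S'): for every graph G and every typing tau,
   (G, tau) in L(S) iff (G, tau) in L(S'), where (G,tau) in L(S) means
   tau is the typing of G w.r.t. S and every node has a type. *)
Definition shape_equiv (Gamma Sigma : finType) (S S' : shape_graph Gamma Sigma) : Prop :=
  forall (N : finType) (E : graph N Sigma) (tau : N -> Gamma -> Prop),
    ((forall n t, tau n t <-> sat S E n t) /\ in_lang S E) <->
    ((forall n t, tau n t <-> sat S' E n t) /\ in_lang S' E).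

Definition type_equiv (Gamma Sigma : finType) (S : shape_graph Gamma Sigma)
  (t t' : Gamma) : Prop :=
  forall (N : finType) (E : graph N Sigma), in_lang S E ->
    forall n : N, sat S E n t <-> sat S E n t'.

From mathcomp Require Import all_boot boolp.
Set Implicit Arguments. Unset Strict Implicit. Unset Printing Implicit Defensive.

(* Write s <= t when, in every graph of L(S), each node satisfying s also
   satisfies t; as S and S' have the same language together with the same
   typings, this preorder is the same for S and S'.  The key inequality is
   sum_{s <= t} minarity_S(u,a,s) <= sum_{s <= t} minarity_S'(u,a,s).  For it,
   take for every type s a graph of L(S) with a node x_s of type s that does not
   satisfy t unless s <= t, glue these graphs disjointly and add a root with an
   edge labelled b to x_s whenever minarity_S'(u,b,s) = 1.  The root has type u for S',
   so the glued graph lies in L(S') = L(S) and the root has type u for S too.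
   An S-typing of its a-edges sends at least sum_{s <= t} minarity_S(u,a,s) of
   them to types below t, and each of these edges points to a distinct x_s with
   s <= t and minarity_S'(u,a,s) = 1.  By symmetry the two sums agree on every
   down-set, and an induction on the size of down-sets transfers the equality
   to equivalence classes; T is the class of t. *)

Lemma in_arity_min_of k i : in_arity k i -> min_of i <= k.
Proof. by case: i => /=; case: k. Qed.

Lemma in_arity_min_of_self i : in_arity (min_of i) i.
Proof. by case: i. Qed.

Lemma min_of_bool i : min_of i = (min_of i == 1).
Proof. by case: i. Qed.

Lemma cards_cond1 (T : finType) (b : bool) (x : T) : #|[set y | b && (y == x)]| = b.
Proof.
case: b => /=; last by apply: eq_card0 => y; rewrite inE.
by rewrite -(cards1 x); apply: eq_card => y; rewrite !inE.
Qed.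

Lemma sum_card_fibers (I J : finType) (A : {set I}) (D : {pred J}) (h : I -> J) :
  \sum_(j in D) #|[set i in A | h i == j]| = #|[set i in A | h i \in D]|.
Proof.
rewrite -sum1_card (partition_big h (mem D)) => [|i]; last by rewrite !inE => /andP[].
apply: eq_bigr => j Dj; rewrite -sum1_card; apply: eq_bigl => i; rewrite !inE.
by case: eqP => [->|]; rewrite ?Dj ?andbT ?andbF.
Qed.

Lemma sum_nat_of_bool (I : finType) (P b : pred I) :
  \sum_(i | P i) (b i : nat) = #|[set i | P i && b i]|.
Proof.
rewrite -sum1_card big_mkcond [RHS]big_mkcond; apply: eq_bigr => i _.
by rewrite inE; case: (P i); case: (b i).
Qed.

Section Satisfaction.
Variables (Gamma Sigma : finType) (S : shape_graph Gamma Sigma).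

Lemma locally_ok_mono (N : finType) (E : graph N Sigma) (R1 R2 : N -> Gamma -> Prop) n t :
  (forall m r, R1 m r -> R2 m r) -> locally_ok S E R1 n t -> locally_ok S E R2 n t.
Proof.
by move=> R12 [lam [lamR lam_card]]; exists lam; split=> // e Ee e_src; apply/R12/lamR.
Qed.

Lemma sat_locally_ok (N : finType) (E : graph N Sigma) n t :
  sat S E n t -> locally_ok S E (sat S E) n t.
Proof.
case=> R [R_post Rnt]; apply: locally_ok_mono (R_post _ _ Rnt) => m r Rmr.
by exists R.
Qed.

Definition edge_map (N1 N2 : finType) (f : N1 -> N2) (e : (N1 * Sigma) * N1) :
  (N2 * Sigma) * N2 := ((f e.1.1, e.1.2), f e.2).

Lemma edge_map_inj (N1 N2 : finType) (f : N1 -> N2) : injective f -> injective (edge_map f).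
Proof. by move=> f_inj [[x b] y] [[x' b'] y'] [/f_inj -> -> /f_inj ->]. Qed.

Section Embedding.
Variables (N1 N2 : finType) (E1 : graph N1 Sigma) (E2 : graph N2 Sigma) (f : N1 -> N2).
Hypothesis f_inj : injective f.
Hypothesis edge_map_in : forall e, e \in E1 -> edge_map f e \in E2.
Hypothesis out_edge_image : forall m e, e \in E2 -> e.1.1 = f m ->
  exists2 e', e' \in E1 & e = edge_map f e'.

Lemma card_out_edges_map m (lam1 lam2 : _ -> Gamma) b s :
  (forall e, e \in E1 -> e.1.1 = m -> lam2 (edge_map f e) = lam1 e) ->
  #|[set e in E2 | (e.1.1 == f m) && (e.1.2 == b) && (lam2 e == s)]| =
  #|[set e in E1 | (e.1.1 == m) && (e.1.2 == b) && (lam1 e == s)]|.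
Proof.
move=> lam12; rewrite -(card_imset _ (edge_map_inj f_inj)); apply: eq_card => e.
rewrite inE; apply/idP/imsetP.
- case/andP=> E2e /andP[/andP[/eqP e_src /eqP e_lbl] /eqP e_lam].
  have [e' E1e' ?] := out_edge_image E2e e_src; subst e.
  have e'_src : e'.1.1 = m := f_inj e_src.
  by exists e'; rewrite // inE E1e' e'_src -lam12 // e_lam -e_lbl !eqxx.
- case=> e'; rewrite inE => /andP[E1e' /andP[/andP[/eqP e'_src /eqP e'_lbl] /eqP e'_lam]] ->.
  by rewrite edge_map_in //= e'_src e'_lbl lam12 // e'_lam !eqxx.
Qed.

Lemma sat_embedding m t : sat S E2 (f m) t <-> sat S E1 m t.
Proof.
split=> [sat2|sat1].
- exists (fun m' r => sat S E2 (f m') r); split=> // m' r /sat_locally_ok[lam [lamR lam_card]].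
  exists (lam \o edge_map f); split=> [e E1e e_src|b s].
    by apply: (lamR (edge_map f e)); rewrite ?edge_map_in //= e_src.
  by rewrite -(card_out_edges_map (lam2 := lam)).
- exists (fun y r => exists2 m', y = f m' & sat S E1 m' r); split; last by exists m.
  move=> _ r [m' -> /sat_locally_ok[lam [lamR lam_card]]].
  pose g y := odflt m' [pick x | f x == y].
  have fK : cancel f g.
    by move=> x; rewrite /g; case: pickP => [x' /eqP/f_inj -> | /(_ x)] //; rewrite eqxx.
  exists (fun e => lam ((g e.1.1, e.1.2), g e.2)); split=> [e E2e e_src|b s].
    have [e' E1e' ?] := out_edge_image E2e e_src; subst e.
    have e'_src : e'.1.1 = m' := f_inj e_src.
    exists e'.2; rewrite //= !fK.
    by case: e' {e_src E2e} E1e' e'_src => [[? ?] ?]; apply: lamR.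
  rewrite (card_out_edges_map (lam1 := lam)) // => -[[? ?] ?] _ _.
  by rewrite /= !fK.
Qed.

End Embedding.
End Satisfaction.

Section Containment.
Variables (Gamma Sigma : finType) (S : shape_graph Gamma Sigma).

Definition canonical_graph : graph Gamma Sigma := [set e | minarity S e.1.1 e.1.2 e.2 == 1].

Lemma canonical_graph_sat s : sat S canonical_graph s s.
Proof.
exists eq; split=> // m _ <-; exists snd; split=> // b s'.
set out := [set _ in _ | _].
have -> : out = [set e | (minarity S m b s' == 1) && (e == ((m, b), s'))].
  apply/setP=> -[[x b'] y]; rewrite !inE /= !xpair_eqE andbC [RHS]andbC.
  by apply: andb_id2l => /andP[/andP[/eqP-> /eqP->] /eqP->].
by rewrite cards_cond1 -min_of_bool; apply: in_arity_min_of_self.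
Qed.

Lemma canonical_graph_lang : in_lang S canonical_graph.
Proof. by move=> n; exists n; apply: canonical_graph_sat. Qed.

Definition contained (s t : Gamma) : Prop :=
  forall (N : finType) (E : graph N Sigma), in_lang S E -> forall n, sat S E n s -> sat S E n t.

Lemma contained_refl s : contained s s.
Proof. by []. Qed.

Lemma contained_trans r s t : contained r s -> contained s t -> contained r t.
Proof. by move=> rs st N E E_lang n /(rs N E E_lang) /(st N E E_lang). Qed.

Lemma type_equiv_contained s t : type_equiv S s t <-> contained s t /\ contained t s.
Proof.
split=> [st | [st ts] N E E_lang n]; last by split; [apply: st | apply: ts].
by split=> N E E_lang n; case: (st N E E_lang n).
Qed.

Lemma separating_graph t s : exists w : {N : finType & (graph N Sigma * N)%type},
  [/\ in_lang S (projT2 w).1, sat S (projT2 w).1 (projT2 w).2 s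
    & sat S (projT2 w).1 (projT2 w).2 t -> contained s t].
Proof.
have [st | not_st] := pselect (contained s t).
  by exists (existT _ Gamma (canonical_graph, s)); split=> //;
    [apply: canonical_graph_lang | apply: canonical_graph_sat].
have /existsNP[N /existsNP[E /not_implyP[E_lang /existsNP[n /not_implyP[ns not_nt]]]]] := not_st.
by exists (existT _ N (E, n)).
Qed.

End Containment.

Section ShapeEquivalence.
Variables (Gamma Sigma : finType).
Implicit Types S : shape_graph Gamma Sigma.

Lemma shape_equiv_sym S S' : shape_equiv S S' -> shape_equiv S' S.
Proof. by move=> SS' N E tau; symmetry. Qed.

Lemma shape_equiv_lang S S' (N : finType) (E : graph N Sigma) : shape_equiv S S' ->
  in_lang S E -> in_lang S' E /\ forall n t, sat S E n t <-> sat S' E n t.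
Proof.
move=> SS' E_lang.
by case: ((SS' N E (sat S E)).1 (conj (fun _ _ => iff_refl _) E_lang)).
Qed.

Lemma shape_equiv_contained S S' s t : shape_equiv S S' -> contained S' s t -> contained S s t.
Proof.
move=> SS' st N E E_lang n.
have [E_lang' satSS'] := shape_equiv_lang SS' E_lang.
by move=> /satSS' /(st _ _ E_lang') /satSS'.
Qed.

End ShapeEquivalence.

Section Gluing.
Variables (Gamma Sigma : finType) (S' : shape_graph Gamma Sigma) (u : Gamma).
Variables (N : Gamma -> finType) (E : forall s, graph (N s) Sigma) (x : forall s, N s).

Definition glued_node := option {s : Gamma & N s}.

Definition component s (y : N s) : glued_node := Some (Tagged N y).

Definition root_edges : {set (glued_node * Sigma) * glued_node} :=
  [set ((None, b), component (x s)) | b in Sigma, s in Gamma & minarity S' u b s == 1].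

Definition glued_graph : graph glued_node Sigma :=
  (\bigcup_s edge_map (@component s) @: E s) :|: root_edges.

(* [u] is a junk value: no edge of the glued graph ends at the root. *)
Definition component_index (z : glued_node) : Gamma := if z is Some w then tag w else u.

Lemma component_inj s : injective (@component s).
Proof. by move=> y1 y2 [eq_y]; apply: eq_from_Tagged eq_y. Qed.

Lemma sat_component (S : shape_graph Gamma Sigma) s (y : N s) r :
  sat S glued_graph (component y) r <-> sat S (E s) y r.
Proof.
apply: sat_embedding => [|e Ee|m e]; first exact: component_inj.
  by rewrite inE; apply/orP; left; apply/bigcupP; exists s; rewrite ?imset_f.
rewrite inE => /orP[/bigcupP[s' _ /imsetP[e' E'e' ->]] e'_src | /imset2P[b s' _ _ ->] //].
have s's : s' = s := congr1 component_index e'_src.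
by subst s'; exists e'.
Qed.

Lemma root_out_edges b s :
  [set e in glued_graph | (e.1.1 == None) && (e.1.2 == b) && (component_index e.2 == s)] =
  [set e | (minarity S' u b s == 1) && (e == ((None, b), component (x s)))].
Proof.
apply/setP=> e; rewrite !inE; apply/idP/idP.
- case/andP=> /orP[/bigcupP[s' _ /imsetP[e' _ ->]] // | /imset2P[b' s' _ m1 ->]].
  by rewrite inE in m1; case/andP: m1 => _ m1 /andP[/andP[_ /eqP <-] /eqP <-]; rewrite m1 eqxx.
- case/andP=> m1 /eqP ->; rewrite !eqxx !andbT; apply/orP; right.
  by apply/imset2P; exists b s; rewrite ?inE.
Qed.

Lemma root_sat : (forall s, sat S' (E s) (x s) s) -> sat S' glued_graph None u.
Proof.
move=> x_sat; exists (fun z r => z = None /\ r = u \/ sat S' glued_graph z r).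
split; last by left.
move=> z r [[-> ->] | /sat_locally_ok]; last by apply: locally_ok_mono => *; right.
exists (component_index \o snd); split=> [e Ee e_src | b s]; last first.
  by rewrite /= root_out_edges cards_cond1 -min_of_bool; apply: in_arity_min_of_self.
have /setP/(_ e) := root_out_edges e.1.2 (component_index e.2).
rewrite inE Ee e_src !eqxx inE => /esym/andP[_ /eqP ->].
by right; apply/sat_component.
Qed.

Lemma glued_graph_lang :
  (forall s, in_lang S' (E s)) -> (forall s, sat S' (E s) (x s) s) -> in_lang S' glued_graph.
Proof.
move=> E_lang x_sat [[s y] | ]; last by exists u; apply: root_sat.
by have [r y_r] := E_lang s y; exists r; apply/sat_component.
Qed.

Lemma sum_minarity_le_root_children (S : shape_graph Gamma Sigma) a (D P : {pred Gamma}) :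
  sat S glued_graph None u ->
  (forall s r, r \in D -> sat S (E s) (x s) r -> s \in P) ->
  \sum_(s in D) minarity S u a s <= \sum_(s in P) minarity S' u a s.
Proof.
move=> /sat_locally_ok[lam [lamR lam_card]] DP.
pose out := [set e in glued_graph | (e.1.1 == None) && (e.1.2 == a)].
have le_out : \sum_(s in D) minarity S u a s <= #|[set e in out | lam e \in D]|.
  rewrite -sum_card_fibers; apply: leq_sum => s _; apply: in_arity_min_of.
  by move: (lam_card a s); congr in_arity; apply: eq_card => e; rewrite !inE -!andbA.
pose children := [set s | (s \in P) && (minarity S' u a s == 1)].
have out_children : [set e in out | lam e \in D] \subset
                    [set ((None, a), component (x s)) | s in children].
  apply/subsetP=> e; rewrite inE => /andP[].
  rewrite inE => /andP[Ee /andP[/eqP e_src /eqP e_lbl]] De.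
  have /setP/(_ e) := root_out_edges a (component_index e.2).
  rewrite inE Ee e_src e_lbl !eqxx inE => /esym/andP[m1 /eqP e_eq].
  apply/imsetP; exists (component_index e.2); rewrite // inE m1 andbT.
  apply: (DP _ _ De); apply/sat_component; rewrite -[component _](congr1 snd e_eq).
  exact: lamR.
apply: (leq_trans le_out); apply: (leq_trans (subset_leq_card out_children)).
apply: (leq_trans (leq_imset_card _ _)).
by rewrite (eq_bigr _ (fun s _ => min_of_bool _)) sum_nat_of_bool.
Qed.

End Gluing.

Lemma downset_sum_minarity_le (Gamma Sigma : finType) (S S' : shape_graph Gamma Sigma)
  (t u : Gamma) (a : Sigma) : shape_equiv S S' ->
  \sum_(s | `[< contained S s t >]) minarity S u a s <=
  \sum_(s | `[< contained S s t >]) minarity S' u a s.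
Proof.
move=> SS'; have [w w_sep] := choice (separating_graph S t).
pose N s := projT1 (w s).
pose E s : graph (N s) Sigma := (projT2 (w s)).1.
pose x s : N s := (projT2 (w s)).2.
have E_lang s : in_lang S (E s) by case: (w_sep s).
have E_lang' s : in_lang S' (E s) := (shape_equiv_lang SS' (E_lang s)).1.
have x_sat' s : sat S' (E s) (x s) s.
  by case: (w_sep s) => _ x_sat _; apply/(shape_equiv_lang SS' (E_lang s)).2.
have [_ sat'S] := shape_equiv_lang (shape_equiv_sym SS') (glued_graph_lang u E_lang' x_sat').
apply: (sum_minarity_le_root_children (x := x)); first by apply/sat'S/root_sat.
move=> s r /asboolP r_t /(r_t _ _ (E_lang s)) x_t; apply/asboolP.
by case: (w_sep s) => _ _; apply.
Qed.

Section ClassSums.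
Variables (G : finType) (c : rel G) (f g : G -> nat).
Hypotheses (c_refl : reflexive c) (c_trans : transitive c).
Hypothesis eq_sum_downsets : forall t, \sum_(s | c s t) f s = \sum_(s | c s t) g s.

Let cls t := [set s | c s t && c t s].

Lemma cls_eq s t : (cls s == cls t) = c s t && c t s.
Proof.
apply/eqP/idP=> [cls_st | /andP[st ts]].
  have : s \in cls s by rewrite inE c_refl.
  by rewrite cls_st inE.
apply/setP=> r; rewrite !inE; apply/andP/andP=> -[rs sr]; split.
- exact: c_trans rs st.
- exact: c_trans ts sr.
- exact: c_trans rs ts.
- exact: c_trans st sr.
Qed.

Lemma eq_sum_cls_closed (A : {pred G}) :
  (forall s t, s \in A -> c s t -> c t s -> t \in A) ->
  (forall t, t \in A -> \sum_(s in cls t) f s = \sum_(s in cls t) g s) ->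
  \sum_(s in A) f s = \sum_(s in A) g s.
Proof.
move=> A_closed eq_cls; rewrite !(partition_big_imset cls).
apply: eq_bigr => _ /imsetP[t At ->].
have cls_blk F : \sum_(s in A | cls s == cls t) F s = \sum_(s in cls t) F s :> nat.
  apply: eq_bigl => s; rewrite cls_eq inE.
  case: (boolP (c s t && c t s)) => [/andP[st ts] | _]; last by rewrite andbF.
  by rewrite andbT (A_closed t).
by rewrite !cls_blk eq_cls.
Qed.

Lemma eq_sum_cls t : \sum_(s in cls t) f s = \sum_(s in cls t) g s.
Proof.
have [n] := ubnP #|[set s | c s t]|; elim: n t => // n IH t; rewrite ltnS => down_t_n.
have split_downset F : \sum_(s | c s t) F s =
    \sum_(s in cls t) F s + \sum_(s in [pred s | c s t && ~~ c t s]) F s :> nat.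
  by rewrite (bigID (c t)); congr (_ + _); apply: eq_bigl => s; rewrite inE.
suff eq_strict : \sum_(s in [pred s | c s t && ~~ c t s]) f s =
                 \sum_(s in [pred s | c s t && ~~ c t s]) g s.
  by apply/(@addIn (\sum_(s in [pred s | c s t && ~~ c t s]) f s));
     rewrite {2}eq_strict -!split_downset.
apply: eq_sum_cls_closed => [s r /andP[st not_ts] sr rs | r /andP[rt not_tr]].
  rewrite inE (c_trans rs st); apply: contraNN not_ts => tr; exact: c_trans tr rs.
apply: IH; apply: leq_trans down_t_n; apply: proper_card; apply/properP; split.
  by apply/subsetP=> s; rewrite !inE => /c_trans; apply.
by exists t; rewrite !inE ?c_refl.
Qed.

End ClassSums.

Theorem proposition4 (Gamma Sigma : finType) (S : shape_graph Gamma Sigma) (t : Gamma)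
  (T : {set Gamma}) (HT : forall s, s \in T <-> type_equiv S t s)
  (S' : shape_graph Gamma Sigma) (HS : shape_equiv S S') (u : Gamma) (a : Sigma) :
  \sum_(s in T) minarity S u a s = \sum_(s in T) minarity S' u a s.
Proof.
pose c s r := `[< contained S s r >].
have c_refl : reflexive c by move=> s; apply/asboolP/contained_refl.
have c_trans : transitive c.
  by move=> r s q /asboolP sr /asboolP rq; apply/asboolP; apply: contained_trans sr rq.
have T_cls : T =i [set s | c s t && c t s].
  move=> s; rewrite inE; apply/idP/andP => [/HT/type_equiv_contained[ts st] | [st ts]].
    by split; apply/asboolP.
  by apply/HT/type_equiv_contained; split; apply/asboolP.
rewrite !(eq_bigl _ _ T_cls); apply: (eq_sum_cls c_refl c_trans) => r.
have c_S' : c^~ r =1 (fun s => `[< contained S' s r >]).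
  move=> s; apply/asboolP/asboolP; last exact: shape_equiv_contained.
  by apply: shape_equiv_contained; apply: shape_equiv_sym.
apply/eqP; rewrite eqn_leq downset_sum_minarity_le //=.
rewrite (eq_bigl _ _ c_S') (eq_bigl _ _ c_S').
exact/downset_sum_minarity_le/shape_equiv_sym.
Qed.
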